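(* Let $G(\circ)$, $G(\ast)$ be groups on $G$ with the same neutral element $1$, and let $f:G\to G$ be a bijection such that $\mathrm{dist}([\circ],[\ast])=\mathrm{dist}(\circ_f,\ast)$. Then either $f(1)=1$, or else $\circ_f=\ast_\ell$ for some transposition $\ell$ of $G$ and $\mathrm{dist}([\circ],[\ast])=\mathrm{dist}(\ast_\ell,\ast)$.
   Context: $G$ is a finite set. For group operations $\circ,\ast$ on $G$, $\mathrm{dist}(\circ,\ast)=|\{(a,b)\in G\times G: a\circ b\ne a\ast b\}|$. For a bijection $f:G\to G$, $\circ_f$ is the operation $a\circ_f b=f(f^{-1}(a)\circ f^{-1}(b))$ (so $f:G(\circ)\to G(\circ_f)$ is an isomorphism). $[\circ]$ is the set of all group operations on $G$ giving groups isomorphic to $G(\circ)$, and $\mathrm{dist}([\circ],[\ast])=\min\{\mathrm{dist}(\bullet,\star): \bullet\in[\circ],\ \star\in[\ast],\ G(\bullet)\ne G(\star)\}$. *)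

From mathcomp Require Import all_boot all_fingroup.
Set Implicit Arguments. Unset Strict Implicit. Unset Printing Implicit Defensive.

Section Defs.
Variable T : finType.

Definition is_group_op (op : T -> T -> T) : Prop :=
  associative op /\
  exists e : T, [/\ left_id e op, right_id e op &
                    forall a, exists b, op a b = e /\ op b a = e].

Definition dist (op1 op2 : T -> T -> T) : nat :=
  #|[set p : T * T | op1 p.1 p.2 != op2 p.1 p.2]|.

Definition conj_op (f : {perm T}) (op : T -> T -> T) : T -> T -> T :=
  fun a b => f (op (f^-1%g a) (f^-1%g b)).

Definition in_iso_class (op op' : T -> T -> T) : Prop :=
  is_group_op op' /\
  exists h : {perm T}, forall a b, h (op a b) = op' (h a) (h b).

(* class_dist_is o s d  <->  dist([o],[s]) = d, i.e. d is the minimum of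
   dist(b, t) over b in [o], t in [s] with b <> t (as operations). *)
Definition class_dist_is (o s : T -> T -> T) (d : nat) : Prop :=
  (exists b t, [/\ in_iso_class o b, in_iso_class s t,
                   b <> t & dist b t = d]) /\
  (forall b t, in_iso_class o b -> in_iso_class s t -> b <> t ->
               d <= dist b t).

End Defs.

(** Write [a] for [conj_op f o], whose neutral element is [u = f e].  If
    [u <> e], conjugating [a] further by the transposition [(e u)] gives an
    operation of [[o]] with neutral element [e].  On the two axes
    [{e} x T] and [T x {e}] (2|T| - 1 pairs) [a] disagrees with [s]
    everywhere while the new operation agrees with [s]; elsewhere it can only
    create disagreements at pairs [(x, y)] with [a x y] in [{e, u}], of which
    there are at most 2(|T| - 1).  So the distance to [s] strictly drops, and
    minimality forces the conjugate to be [s] itself, i.e.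
    [a = conj_op (tperm e u) s]. *)

From mathcomp Require Import all_boot all_fingroup.
From Stdlib Require Import FunctionalExtensionality Classical.

Set Implicit Arguments. Unset Strict Implicit. Unset Printing Implicit Defensive.

Section ConjOp.
Variable T : finType.
Implicit Types (op : T -> T -> T) (g h : {perm T}).

Lemma conj_op_left_id g op e : left_id e op -> left_id (g e) (conj_op g op).
Proof. by move=> l_e x; rewrite /conj_op permK l_e permKV. Qed.

Lemma conj_op_right_id g op e : right_id e op -> right_id (g e) (conj_op g op).
Proof. by move=> r_e x; rewrite /conj_op permK r_e permKV. Qed.

Lemma conj_opM g h op : conj_op g (conj_op h op) = conj_op (h * g) op.
Proof.
by do 2!apply: functional_extensionality => ?; rewrite /conj_op invMg !permM.
Qed.

Lemma conj_op1 op : conj_op 1 op = op.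
Proof. by do 2!apply: functional_extensionality => ?; rewrite /conj_op invg1 !perm1. Qed.

Variable op : T -> T -> T.
Hypothesis op_group : is_group_op op.

Lemma group_op_rinj : right_injective op.
Proof.
case: op_group => opA [e [l_e _ inv]] x y y' eq_xy.
have [z [_ zx]] := inv x.
by rewrite -(l_e y) -(l_e y') -zx -!opA eq_xy.
Qed.

Lemma group_op_linj : left_injective op.
Proof.
case: op_group => opA [e [_ r_e inv]] x y y' eq_yx.
have [z [xz _]] := inv x.
by rewrite -(r_e y) -(r_e y') -xz !opA eq_yx.
Qed.

Lemma conj_op_group g : is_group_op (conj_op g op).
Proof.
case: op_group => opA [e [l_e r_e inv]]; split.
  by move=> x y z; rewrite /conj_op !permK opA.
exists (g e); split; [exact: conj_op_left_id | exact: conj_op_right_id |].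
move=> x; have [z [xz zx]] := inv (g^-1%g x).
by exists (g z); rewrite /conj_op !permK xz zx.
Qed.

Lemma in_iso_class_conj g : in_iso_class op (conj_op g op).
Proof. by split; [exact: conj_op_group | exists g => x y; rewrite /conj_op !permK]. Qed.

Lemma in_iso_class_refl : in_iso_class op op.
Proof. by rewrite -[X in in_iso_class _ X]conj_op1; apply: in_iso_class_conj. Qed.

End ConjOp.

Section TransposeNeutral.
Variables (T : finType) (a s : T -> T -> T) (e u : T).
Hypotheses (a_group : is_group_op a) (s_group : is_group_op s).
Hypotheses (l_u : left_id u a) (r_u : right_id u a).
Hypotheses (l_e : left_id e s) (r_e : right_id e s).
Hypothesis u_neq_e : u != e.

Local Notation b := (conj_op (tperm e u) a).

Definition diff_set (op1 op2 : T -> T -> T) :=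
  [set p : T * T | op1 p.1 p.2 != op2 p.1 p.2].

Definition axis_set := [set p : T * T | (p.1 == e) || (p.2 == e)].

Definition swap_hit_set := [set p : T * T | (p.1 != e) && (a p.1 p.2 \in [set e; u])].

Lemma conj_tpermE x y : b x y = tperm e u (a (tperm e u x) (tperm e u y)).
Proof. by rewrite /conj_op tpermV. Qed.

Lemma axis_sub_diff : axis_set \subset diff_set a s.
Proof.
apply/subsetP => -[x y]; rewrite !inE /= => /orP[] /eqP ->; apply: contra u_neq_e.
  rewrite l_e => /eqP ey; apply/eqP/(group_op_linj a_group (_ : a u y = a e y)).
  by rewrite l_u ey.
rewrite r_e => /eqP xe; apply/eqP/(group_op_rinj a_group (_ : a x u = a x e)).
by rewrite r_u xe.
Qed.

Lemma conj_tperm_axis x y : (x, y) \in axis_set -> b x y = s x y.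
Proof.
rewrite inE /= conj_tpermE => /orP[] /eqP ->.
  by rewrite l_e tpermL l_u tpermK.
by rewrite r_e tpermL r_u tpermK.
Qed.

(* [a u y = y = s e y] would force [u = e]. *)
Lemma agree_off_axis x y : x != e -> y != e -> a x y = s x y -> (x != u) && (y != u).
Proof.
move=> x_e y_e axy; apply/andP; split.
  apply: contra x_e => /eqP x_u; apply/eqP/(group_op_linj s_group (_ : s x y = s e y)).
  by rewrite -axy x_u l_u l_e.
apply: contra y_e => /eqP y_u; apply/eqP/(group_op_rinj s_group (_ : s x y = s x e)).
by rewrite -axy y_u r_u r_e.
Qed.

Lemma diff_conj_tperm_sub :
  diff_set b s \subset (diff_set a s :\: axis_set) :|: swap_hit_set.
Proof.
apply/subsetP => -[x y]; rewrite inE /= => bxy.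
have : (x, y) \notin axis_set by apply: contra bxy => /conj_tperm_axis ->.
rewrite !inE /= negb_or => /andP[x_e y_e].
rewrite x_e y_e /=; case: eqP => //= axy.
have /andP[x_u y_u] := agree_off_axis x_e y_e axy.
apply: contraR bxy; rewrite negb_or => /andP[xy_e xy_u].
by apply/eqP; rewrite conj_tpermE !tpermD // eq_sym.
Qed.

Lemma card_swap_hit_lt_axis : #|swap_hit_set| < #|axis_set|.
Proof.
(* [h (x, y)] records [x] and which of [e], [u] the product [a x y] is; it never hits [(e, e)]. *)
pose h (p : T * T) := if a p.1 p.2 == e then (p.1, e) else (e, p.1).
pose h_inv (q : T * T) := if q.1 == e then (q.2, u) else (q.1, e).
have h_invK : {in swap_hit_set, forall p, h_inv (h p) = (p.1, a p.1 p.2)}.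
  move=> [x y]; rewrite !inE /h /h_inv /= => /andP[x_e].
  by case: eqP => [-> | _] /=; rewrite ?(negbTE x_e) ?eqxx //= => /eqP ->.
have h_inj : {in swap_hit_set &, injective h}.
  move=> [x y] [x' y'] hit hit' /(congr1 h_inv); rewrite !h_invK // => -[<- eq_a].
  by rewrite (group_op_rinj a_group eq_a).
rewrite -(card_in_imset h_inj) (cardsD1 (e, e) axis_set) inE eqxx add1n ltnS.
apply/subset_leq_card/subsetP => _ /imsetP[[x y] + ->].
rewrite !inE /h /= => /andP[x_e _].
by case: ifP => _; rewrite /= xpair_eqE (negbTE x_e) ?eqxx ?andbF ?orbT.
Qed.

Lemma dist_conj_tperm_lt : dist b s < dist a s.
Proof.
have axis_diff : diff_set a s :&: axis_set = axis_set by apply/setIidPr/axis_sub_diff.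
rewrite /dist -!/(diff_set _ _) -(cardsID axis_set (diff_set a s)) axis_diff addnC.
apply: (leq_ltn_trans (subset_leq_card diff_conj_tperm_sub)).
apply: (leq_ltn_trans (leq_card_setU _ _).1).
by rewrite ltn_add2l card_swap_hit_lt_axis.
Qed.

End TransposeNeutral.

Theorem lemma3p3 (T : finType) (o s : T -> T -> T) (e : T) (f : {perm T}) :
  is_group_op o -> is_group_op s ->
  left_id e o -> right_id e o -> left_id e s -> right_id e s ->
  class_dist_is o s (dist (conj_op f o) s) ->
  f e = e \/
  exists x y : T, [/\ x != y,
    conj_op f o = conj_op (tperm x y) s &
    class_dist_is o s (dist (conj_op (tperm x y) s) s)].
Proof.
move=> o_group s_group l_e_o r_e_o l_e r_e f_min.
have [fe | fe_neq] := eqVneq (f e) e; [by left | right].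
set a := conj_op f o.
have a_group : is_group_op a := conj_op_group o_group f.
have l_fe : left_id (f e) a := conj_op_left_id f l_e_o.
have r_fe : right_id (f e) a := conj_op_right_id f r_e_o.
set b := conj_op (tperm e (f e)) a.
have b_class : in_iso_class o b by rewrite /b /a conj_opM; apply: in_iso_class_conj.
have [b_s | b_neq_s] := classic (b = s); last first.
  have := f_min.2 _ _ b_class (in_iso_class_refl s_group) b_neq_s.
  by rewrite leqNgt (dist_conj_tperm_lt a_group s_group l_fe r_fe l_e r_e fe_neq).
have a_eq : a = conj_op (tperm e (f e)) s by rewrite -b_s conj_opM tperm2 conj_op1.
by exists e, (f e); split; [rewrite eq_sym | | rewrite -a_eq].
Qed.
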